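(* Let $(X,d,\kappa)$ be a digital metric space with $X$ finite, and let $T:X\to X$. If $T$ is a digital contraction map, then there exists $\phi\in\Phi$ such that $T$ is $\phi$-contractive. Conversely (with $X$ finite), if $T$ is $\phi$-contractive for some $\phi\in\Phi$, then $T$ is a digital contraction map.
   Context: A digital metric space is a triple $(X,d,\kappa)$ where $X\subset\mathbb{Z}^n$ for some positive integer $n$, $\kappa$ is an adjacency relation on $X$, and $d$ is a metric on $X$. $\Phi$ is the set of functions $\phi:[0,\infty)\to[0,\infty)$ that are increasing, satisfy $\phi(t)=0$ iff $t=0$, and $\phi(t)<t$ for $t>0$. $T$ is $\phi$-contractive if $\phi(d(T(x),T(y)))<\phi(d(x,y))$ for all $x,y\in X$ with $x\ne y$. $T$ is a digital contraction map if there is $\alpha\in(0,1)$ with $d(T(x),T(y))\le\alpha\,d(x,y)$ for all $x,y\in X$. *)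

From HB Require Import structures.
From mathcomp Require Import all_boot all_order all_algebra.
From mathcomp Require Import finmap.
From mathcomp Require Import reals.
Set Implicit Arguments. Unset Strict Implicit. Unset Printing Implicit Defensive.
Import Order.TTheory GRing.Theory Num.Theory.
Local Open Scope ring_scope.

(* An adjacency relation on X: a symmetric relation (it plays no role in the result). *)
Definition adjacency (T : Type) (kappa : rel T) : Prop := symmetric kappa.

Definition is_metric (R : realFieldType) (T : Type) (d : T -> T -> R) : Prop :=
  [/\ forall x y, 0 <= d x y,
      forall x y, d x y = 0 <-> x = y,
      forall x y, d x y = d y x
    & forall x y z, d x z <= d x y + d y z].

(* Φ : phi : [0,oo) -> [0,oo), increasing, phi t = 0 iff t = 0, phi t < t for t > 0.
   phi is represented as a function R -> R; only its values on [0,oo) matter. *)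
Definition in_Phi (R : realFieldType) (phi : R -> R) : Prop :=
  [/\ forall t, 0 <= t -> 0 <= phi t,
      forall s t, 0 <= s -> s < t -> phi s < phi t,
      forall t, 0 <= t -> (phi t = 0 <-> t = 0)
    & forall t, 0 < t -> phi t < t].

Definition phi_contractive (R : realFieldType) (T : Type) (d : T -> T -> R)
  (phi : R -> R) (f : T -> T) : Prop :=
  forall x y, x <> y -> phi (d (f x) (f y)) < phi (d x y).

Definition digital_contraction (R : realFieldType) (T : Type) (d : T -> T -> R)
  (f : T -> T) : Prop :=
  exists alpha : R, [/\ 0 < alpha, alpha < 1 &
    forall x y, d (f x) (f y) <= alpha * d x y].

From HB Require Import structures.
From mathcomp Require Import all_boot all_order all_algebra.
From mathcomp Require Import finmap.
From mathcomp Require Import reals.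
Import Order.TTheory GRing.Theory Num.Theory.
Local Open Scope ring_scope.

(* A contraction with constant alpha < 1 strictly shrinks distances, and every
   phi in Phi is strictly increasing, so it is phi-contractive for all such phi
   (e.g. t / 2).  Conversely, strict monotonicity of phi turns phi-contractivity
   into d (T x) (T y) < d x y for x <> y; on a finite space the largest of the
   finitely many ratios d (T x) (T y) / d x y is then a contraction constant. *)

Section MetricFacts.

Variables (R : realFieldType) (S : Type) (d : S -> S -> R).
Hypothesis d_metric : is_metric d.

Lemma dist_xx (x : S) : d x x = 0.
Proof. by case: d_metric => _ dE _ _; apply/dE. Qed.

Lemma dist_gt0 (x y : S) : x <> y -> 0 < d x y.
Proof.
case: d_metric => d0 dE _ _ xy.
by rewrite lt_def d0 andbT; apply/eqP => /dE.
Qed.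

Lemma digital_contraction_phi_contractive (phi : R -> R) (f : S -> S) :
  in_Phi phi -> digital_contraction d f -> phi_contractive d phi f.
Proof.
case: d_metric => d0 _ _ _ [_ phi_incr _ _] [a [_ a_lt1 contr]] x y xy.
apply: phi_incr; first exact: d0.
apply: le_lt_trans (contr x y) _.
by rewrite gtr_pMl // dist_gt0.
Qed.

Lemma phi_contractive_dist_lt (phi : R -> R) (f : S -> S) (x y : S) :
  in_Phi phi -> phi_contractive d phi f -> x <> y -> d (f x) (f y) < d x y.
Proof.
case: d_metric => d0 _ _ _ [_ phi_incr _ _] contr xy.
rewrite ltNge le_eqVlt; apply/negP => /orP[/eqP eq_d | lt_d].
  by have := contr x y xy; rewrite eq_d ltxx.
by have := lt_trans (contr x y xy) (phi_incr _ _ (d0 x y) lt_d); rewrite ltxx.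
Qed.

End MetricFacts.

Lemma in_Phi_half (R : realFieldType) : in_Phi (fun t : R => t / 2).
Proof.
split.
- by move=> t t_ge0; rewrite divr_ge0.
- by move=> s t _ st; rewrite ltr_pM2r // invr_gt0.
- move=> t _; split=> [|->]; last by rewrite mul0r.
  by move/eqP; rewrite mulf_eq0 invr_eq0 pnatr_eq0 orbF => /eqP.
- by move=> t t_gt0; rewrite ltr_pdivrMr // ltr_pMr // ltr1n.
Qed.

Lemma fin_strict_contraction_digital_contraction
    (R : realFieldType) (S : finType) (d : S -> S -> R) (f : S -> S) :
  is_metric d -> (forall x y, x <> y -> d (f x) (f y) < d x y) ->
  digital_contraction d f.
Proof.
move=> d_metric shrink.
pose ratio (p : S * S) := d (f p.1) (f p.2) / d p.1 p.2.
(* The default value 1/2 keeps alpha positive even when S has at most one point. *)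
exists (\big[Order.max/2^-1]_(p : S * S | p.1 != p.2) ratio p); split.
- by apply: lt_le_trans (bigmax_ge_id _ _ _ _); rewrite invr_gt0 ltr0n.
- apply: bigmax_lt; first by rewrite invf_lt1 // ltr1n.
  move=> [x y] /= /eqP xy.
  by rewrite /ratio ltr_pdivrMr ?mul1r ?dist_gt0 //; apply: shrink.
- move=> x y; have [->|xy] := eqVneq x y.
    by rewrite !dist_xx // mulr0.
  rewrite -ler_pdivrMr ?dist_gt0 //; last exact/eqP.
  exact: (@le_bigmax_cond _ _ _ _ (x, y) (fun p : S * S => p.1 != p.2) ratio).
Qed.

Theorem proposition7p5 (R : realType) (n : nat) (X : {fset 'rV[int]_n})
  (kappa : rel X) (d : X -> X -> R) (T : X -> X) :
  adjacency kappa -> is_metric d ->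
  (digital_contraction d T -> exists phi : R -> R, in_Phi phi /\ phi_contractive d phi T) /\
  (forall phi : R -> R, in_Phi phi -> phi_contractive d phi T -> digital_contraction d T).
Proof.
move=> _ d_metric; split.
  move=> contr; exists (fun t => t / 2); split; first exact: in_Phi_half.
  exact: digital_contraction_phi_contractive (in_Phi_half R) contr.
move=> phi phi_Phi contr.
apply: fin_strict_contraction_digital_contraction => // x y.
exact: phi_contractive_dist_lt phi_Phi contr.
Qed.
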